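(* Let $p$ be an odd prime and $d\ge2$. Let $s_n$ denote the number of open subgroups of index at most $n$ in $SL_d(\mathbb Z_p)$. Then there are infinitely many positive integers $n$ with $s_n\ge n^{c}$, where $c=(3-2\sqrt2)d^2-2(2-\sqrt2)$.
   Context: $\mathbb Z_p$ denotes the ring of $p$-adic integers. *)

From HB Require Import structures.
From mathcomp Require Import all_boot all_order all_algebra.
From mathcomp Require boolp.

Set Implicit Arguments.
Unset Strict Implicit.
Unset Printing Implicit Defensive.

Import Order.TTheory GRing.Theory Num.Theory.
Local Open Scope ring_scope.

(* Z_p = lim_k Z/p^k Z : an element is a sequence (x_k)_k of integers  *)
(* with x_k = x_{k+1} mod p^k (hence 0 <= x_k < p^k, x_k the residue   *)
(* of the p-adic integer mod p^k).                                     *)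

Definition pk (p k : nat) : int := (p ^ k)%N%:Z.

Definition coherent (p : nat) (x : nat -> int) :=
  forall k, x k = (x k.+1 %% pk p k)%Z.

Record Zpadic (p : nat) := MkZp { zp_seq : nat -> int; zp_coh : coherent p zp_seq }.

HB.instance Definition _ p := boolp.gen_eqMixin (Zpadic p).
HB.instance Definition _ p := boolp.gen_choiceMixin (Zpadic p).

Lemma mod_mod_dvd (d e m : int) : ((m %% (d * e))%Z %% d)%Z = (m %% d)%Z.
Proof.
rewrite [in RHS](divz_eq m (d * e)).
have -> : (m %/ (d * e))%Z * (d * e) = ((m %/ (d * e))%Z * e) * d.
  by rewrite -mulrA [e * d]mulrC.
by rewrite modzMDl.
Qed.

Lemma pkS p k : pk p k.+1 = pk p k * p%:Z.
Proof. by rewrite /pk expnSr PoszM. Qed.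

Lemma mod_pkS p k (m : int) : ((m %% pk p k.+1)%Z %% pk p k)%Z = (m %% pk p k)%Z.
Proof. by rewrite pkS mod_mod_dvd. Qed.

Section ZpRing.
Variable p : nat.
Local Notation Z := (Zpadic p).

Lemma coh_mod (x : Z) k : (zp_seq x k %% pk p k)%Z = zp_seq x k.
Proof. by rewrite [in RHS](zp_coh x k) [in LHS](zp_coh x k) modz_mod. Qed.

Lemma zp_ext (x y : Z) : (forall k, zp_seq x k = zp_seq y k) -> x = y.
Proof.
case: x => x cx; case: y => y cy /= E.
have Exy : x = y by apply: boolp.funext. subst y.
by congr MkZp; apply: boolp.Prop_irrelevance.
Qed.

Lemma coh0 : coherent p (fun _ => 0).
Proof. by move=> k; rewrite mod0z. Qed.
Definition zp0 : Z := MkZp coh0.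

Lemma coh1 : coherent p (fun k => (1 %% pk p k)%Z).
Proof. by move=> k; rewrite mod_pkS. Qed.
Definition zp1 : Z := MkZp coh1.

Lemma cohD (x y : Z) :
  coherent p (fun k => (zp_seq x k + zp_seq y k) %% pk p k)%Z.
Proof.
move=> k; rewrite mod_pkS (zp_coh x k) (zp_coh y k).
by rewrite modzDml modzDmr.
Qed.
Definition zpD (x y : Z) : Z := MkZp (cohD x y).

Lemma cohN (x : Z) : coherent p (fun k => (- zp_seq x k) %% pk p k)%Z.
Proof. by move=> k; rewrite mod_pkS (zp_coh x k) modzNm. Qed.
Definition zpN (x : Z) : Z := MkZp (cohN x).

Lemma cohM (x y : Z) :
  coherent p (fun k => (zp_seq x k * zp_seq y k) %% pk p k)%Z.
Proof.
move=> k; rewrite mod_pkS (zp_coh x k) (zp_coh y k).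
by rewrite modzMml modzMmr.
Qed.
Definition zpM (x y : Z) : Z := MkZp (cohM x y).

Lemma zpDA : associative zpD.
Proof. by move=> x y z; apply: zp_ext => k /=; rewrite modzDml modzDmr addrA. Qed.
Lemma zpDC : commutative zpD.
Proof. by move=> x y; apply: zp_ext => k /=; rewrite addrC. Qed.
Lemma zp0D : left_id zp0 zpD.
Proof. by move=> x; apply: zp_ext => k /=; rewrite add0r coh_mod. Qed.
Lemma zpND : left_inverse zp0 zpN zpD.
Proof. by move=> x; apply: zp_ext => k /=; rewrite modzDml addNr mod0z. Qed.

HB.instance Definition _ := GRing.isZmodule.Build Z zpDA zpDC zp0D zpND.

Lemma zpMA : associative zpM.
Proof. by move=> x y z; apply: zp_ext => k /=; rewrite modzMml modzMmr mulrA. Qed.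
Lemma zpMC : commutative zpM.
Proof. by move=> x y; apply: zp_ext => k /=; rewrite mulrC. Qed.
Lemma zp1M : left_id zp1 zpM.
Proof. by move=> x; apply: zp_ext => k /=; rewrite modzMml mul1r coh_mod. Qed.
Lemma zpMDl : left_distributive zpM (@GRing.add Z).
Proof.
move=> x y z; apply: zp_ext => k /=.
by rewrite modzMml mulrDl modzDml modzDmr.
Qed.

HB.instance Definition _ := GRing.Zmodule_isComPzRing.Build Z zpMA zpMC zp1M zpMDl.

End ZpRing.

Section SLd.
Variables (p d : nat).
Local Notation M := ('M[Zpadic p]_d).

Definition inSL (A : M) : Prop := \det A = 1.

(* A = B mod p^m, i.e. the entries of A - B lie in p^m Z_p *)
Definition congr_mod (m : nat) (A B : M) : Prop :=
  forall i j, zp_seq (A i j) m = zp_seq (B i j) m.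

Definition is_openSL (U : M -> Prop) : Prop :=
  forall A, U A -> exists m : nat, forall B, inSL B -> congr_mod m A B -> U B.

Definition is_subgroupSL (H : M -> Prop) : Prop :=
  [/\ (forall A, H A -> inSL A),
      H 1%:M,
      (forall A B, H A -> H B -> H (A *m B)) &
      (forall A B, H A -> inSL B -> A *m B = 1%:M -> H B)].

Definition index_leSL (H : M -> Prop) (n : nat) : Prop :=
  exists g : 'I_n -> M, (forall i, inSL (g i)) /\
    forall A, inSL A -> exists i, exists h, H h /\ A = g i *m h.

Definition open_subgroup_index_le (H : M -> Prop) (n : nat) : Prop :=
  [/\ is_subgroupSL H, is_openSL H & index_leSL H n].

End SLd.

From Stdlib Require Reals.

Definition growth_exponent (d : nat) : Rdefinitions.R :=
  Rdefinitions.Rminus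
    (Rdefinitions.Rmult
       (Rdefinitions.Rminus (Raxioms.INR 3%N)
          (Rdefinitions.Rmult (Raxioms.INR 2%N) (R_sqrt.sqrt (Raxioms.INR 2%N))))
       (Raxioms.INR (d * d)))
    (Rdefinitions.Rmult (Raxioms.INR 2%N)
       (Rdefinitions.Rminus (Raxioms.INR 2%N) (R_sqrt.sqrt (Raxioms.INR 2%N)))).

(* Let q = p^m and let Gamma be the level-q congruence subgroup of SL_d(Z_p).
   On Gamma, A |-> (A - 1) mod q^2 is a homomorphism into q M_d(Z/q^2), which
   is isomorphic to M_d(Z/q).  Write d^2 - 1 = r + t.  Every t x r matrix phi
   over Z/q gives the subgroup of those A in Gamma whose entries r, ..., r+t-1
   of (A - 1) mod q^2 are the phi-combinations of the first r entries.  These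
   q^(tr) subgroups are open (they contain the level-q^2 subgroup), have index
   at most q^(d^2) q^t, and are pairwise distinct: elements of Z_p that are
   1 mod p are units, so the last diagonal entry of 1 + q V can be corrected to
   give a determinant 1 test element with arbitrary other entries.  Taking
   u = ceil (sqrt 2 (d^2 - 1)), t = u - (d^2 - 1) and r = 2 (d^2 - 1) - u
   yields tr >= c (d^2 + t), i.e. q^(tr) >= n^c for n = q^(d^2 + t), and n
   grows with m. *)

From Stdlib Require Reals Lra Psatz Lia.

Module GrowthExponent.
Import Reals Lra Psatz Lia.
Local Open Scope R_scope.

Lemma exponent_ineq (x y : R) : 0 <= x -> 1 <= y ->
  2 * x * x <= y * y -> (y - 1) * (y - 1) <= 2 * x * x ->
  ((3 - 2 * sqrt 2) * (x + 1) - 2 * (2 - sqrt 2)) * (1 + y)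
    <= (y - x) * (2 * x - y).
Proof.
intros x0 y1 lo hi.
set (s := sqrt 2).
assert (s2 : s * s = 2) by (apply sqrt_sqrt; lra).
assert (s0 : 0 <= s) by apply sqrt_pos.
set (w := s * x).
assert (w2 : w * w = 2 * x * x) by (unfold w; nra).
assert (w0 : 0 <= w) by (unfold w; nra).
assert (xw : x <= w) by (unfold w; nra).
assert (wy : w <= y) by (destruct (Rle_or_lt w y) as [h|h]; [exact h | nra]).
assert (yw : y - 1 <= w)
  by (destruct (Rle_or_lt (y - 1) w) as [h|h]; [exact h | nra]).
(* with [e = y - w], the difference of the two sides is
   [3 (w - x) + 1 + e (1 - e)] *)
assert (e01 : 0 <= (y - w) * (1 - (y - w))) by (apply Rmult_le_pos; lra).
replace ((3 - 2 * s) * (x + 1) - 2 * (2 - s)) with (3 * x - 2 * w - 1)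
  by (unfold w; ring).
nra.
Qed.

Lemma growth_exponent_le (d D u : nat) :
  (d * d = D + 1)%nat -> (D <= u <= 2 * D)%nat ->
  (2 * D * D <= u * u)%nat -> ((u - 1) * (u - 1) < 2 * D * D)%nat ->
  growth_exponent d * INR (d * d + (u - D)) <= INR ((u - D) * (2 * D - u)).
Proof.
intros dD uD lo hi.
assert (u1 : (1 <= u)%nat) by nia.
assert (dd : INR d * INR d = INR D + 1)
  by (rewrite <- mult_INR, dD, plus_INR; reflexivity).
apply le_INR in lo; apply lt_INR in hi.
rewrite !mult_INR in lo, hi; rewrite minus_INR in hi by lia.
rewrite plus_INR, !mult_INR, !minus_INR, mult_INR, dd by lia.
unfold growth_exponent; rewrite mult_INR, dd.
replace (INR 3) with 3 by (simpl; ring); replace (INR 2) with 2 by (simpl; ring).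
replace (INR 2) with 2 in lo, hi by (simpl; ring).
replace (INR 1) with 1 in hi by reflexivity.
replace (INR D + 1 + (INR u - INR D)) with (1 + INR u) by ring.
apply exponent_ineq; [apply pos_INR | apply (le_INR 1); exact u1 | lra | lra].
Qed.

Lemma INR_expn (a b : nat) : INR (ssrnat.expn a b) = INR a ^ b.
Proof.
induction b as [|b IH]; [reflexivity|].
rewrite ssrnat.expnS, ssrnat.mulnE, mult_INR, IH; reflexivity.
Qed.

Lemma Rpower_pow_le (x c : R) (a b : nat) : 1 <= x -> c * INR a <= INR b ->
  Rpower (x ^ a) c <= x ^ b.
Proof.
intros x1 cab.
rewrite <- !Rpower_pow, Rpower_mult by lra.
apply Rle_Rpower; lra.
Qed.

End GrowthExponent.

From HB Require Import structures.
From mathcomp Require Import all_boot all_order all_algebra.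
From mathcomp Require Import ring zify.
From mathcomp Require boolp.

Set Implicit Arguments.
Unset Strict Implicit.
Unset Printing Implicit Defensive.

Import Order.TTheory GRing.Theory Num.Theory.
Local Open Scope ring_scope.

Lemma Zp_intr_mod (n : nat) (z : int) : (1 < n)%N ->
  (((z %% n%:Z)%Z)%:~R : 'Z_n) = z%:~R.
Proof.
move=> n_gt1; rewrite /modz intrB intrM.
by rewrite [(n%:Z)%:~R]pchar_Zp // mulr0 subr0.
Qed.

Lemma Zp_intr_val (n : nat) (z : int) : (1 < n)%N -> 0 <= z -> z < n%:Z ->
  val (z%:~R : 'Z_n) = absz z.
Proof.
move=> n_gt1; case: z => // a _; rewrite ltz_nat => an.
by rewrite /= val_Zp_nat // modn_small.
Qed.

Lemma zp_seq_bounds p (x : Zpadic p) k : 0 < pk p k -> 0 <= zp_seq x k < pk p k.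
Proof. by move=> pk_gt0; rewrite -coh_mod modz_ge0 ?ltz_pmod ?gt_eqF. Qed.

Section ZpadicLevels.
Variable p : nat.
Hypothesis p_gt1 : (1 < p)%N.

Lemma pk_gt1 k : (0 < k)%N -> (1 < p ^ k)%N.
Proof. by move=> k_gt0; rewrite -(expn0 p) ltn_exp2l. Qed.

Lemma zp_seq_mod_pk (x : Zpadic p) m j :
  zp_seq x m = (zp_seq x (m + j) %% pk p m)%Z.
Proof.
elim: j => [|j IH]; first by rewrite addn0 coh_mod.
rewrite IH (zp_coh x (m + j)) addnS.
by rewrite [pk p (m + j)]/pk expnD PoszM mod_mod_dvd.
Qed.

Lemma zp_seq0 (x : Zpadic p) : zp_seq x 0 = 0.
Proof. by rewrite -coh_mod /pk expn0 modz1. Qed.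

End ZpadicLevels.

(* [zp_red] takes the proof [h] that [Z/p^k] is nontrivial as an argument so
   that [zp_red h] can carry a canonical ring morphism structure. *)
Section Reduction.
Variables (p k : nat).
Hypothesis pk_gt1 : (1 < p ^ k)%N.

Definition zp_red (h : (1 < p ^ k)%N) (x : Zpadic p) : 'Z_(p ^ k) := (zp_seq x k)%:~R.

Lemma zp_red_is_nmod_morphism : nmod_morphism (zp_red pk_gt1).
Proof. by split=> // x y; rewrite /zp_red /= Zp_intr_mod // intrD. Qed.

Lemma zp_red_is_monoid_morphism : monoid_morphism (zp_red pk_gt1).
Proof.
split; first by rewrite /zp_red /= Zp_intr_mod.
by move=> x y; rewrite /zp_red /= Zp_intr_mod // intrM.
Qed.

HB.instance Definition _ := GRing.isNmodMorphism.Build _ _ (zp_red pk_gt1)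
  zp_red_is_nmod_morphism.
HB.instance Definition _ := GRing.isMonoidMorphism.Build _ _ (zp_red pk_gt1)
  zp_red_is_monoid_morphism.

Lemma zp_red_inj (x y : Zpadic p) :
  zp_red pk_gt1 x = zp_red pk_gt1 y -> zp_seq x k = zp_seq y k.
Proof.
have pk_gt0 : 0 < pk p k by rewrite ltz_nat (ltn_trans _ pk_gt1).
rewrite /zp_red => /(congr1 val).
have /andP[x0 xk] := zp_seq_bounds x pk_gt0.
have /andP[y0 yk] := zp_seq_bounds y pk_gt0.
rewrite !Zp_intr_val // => E.
by rewrite -(gez0_abs x0) -(gez0_abs y0) E.
Qed.

End Reduction.

Arguments zp_red_inj {p k} pk_gt1 {x y}.

Section ZpadicUnits.
Variable p : nat.
Hypothesis p_gt1 : (1 < p)%N.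

Lemma zp_red_1modp_nilpotent k (hk : (1 < p ^ k)%N) (x : Zpadic p) :
  zp_seq x 1 = 1 -> (1 - zp_red hk x) ^+ k = 0.
Proof.
move=> x1.
have k_gt0 : (0 < k)%N by case: k hk; rewrite ?expn0.
have xk : zp_seq x k = (zp_seq x k %/ p)%Z * p + 1.
  by rewrite {1}(divz_eq (zp_seq x k) p) -[k](subnKC k_gt0) -zp_seq_mod_pk x1.
rewrite /zp_red xk intrD intrM -[1%:~R]/(1 : 'Z_(p ^ k)) -[p%:~R]/(p%:R : 'Z_(p ^ k)).
by rewrite opprD addrA addrAC subrr sub0r exprNn exprMn -natrX pchar_Zp // !mulr0.
Qed.

(* The inverse of [x] is the geometric series [\sum_i (1 - x)^i], which
   truncates at level [k] after [k] terms. *)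
Lemma zp_unit_1modp (x : Zpadic p) : zp_seq x 1 = 1 -> exists w, x * w = 1.
Proof.
move=> x1.
pose S k := \sum_(i < k) (1 - x) ^+ i.
have mulS k : x * S k = 1 - (1 - x) ^+ k.
  by rewrite -opprB subrX1 addrAC subrr add0r mulNr opprK.
have S_stable k : zp_seq (S k.+1) k = zp_seq (S k) k.
  case: k => [|k]; first by rewrite !zp_seq0.
  have hk := pk_gt1 p_gt1 (ltn0Sn k).
  apply: (zp_red_inj hk).
  by rewrite /S big_ord_recr /= rmorphD rmorphXn rmorphB rmorph1
    zp_red_1modp_nilpotent // addr0.
have cohS : coherent p (fun k => zp_seq (S k) k).
  by move=> k; rewrite /= -S_stable zp_coh.
exists (MkZp cohS); apply: zp_ext => -[|k]; first by rewrite !zp_seq0.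
have hk := pk_gt1 p_gt1 (ltn0Sn k).
transitivity (zp_seq (x * S k.+1) k.+1); first by [].
apply: (zp_red_inj hk).
by rewrite mulS rmorphB rmorph1 rmorphXn rmorphB rmorph1
  zp_red_1modp_nilpotent // subr0 rmorph1.
Qed.

Lemma zp_unit_red1 k (hk : (1 < p ^ k)%N) (x : Zpadic p) :
  zp_red hk x = 1 -> exists w, x * w = 1.
Proof.
rewrite -(rmorph1 (zp_red hk)) => /(zp_red_inj hk) xk; apply: zp_unit_1modp.
have k_gt0 : (0 < k)%N by case: k hk xk; rewrite ?expn0.
rewrite (zp_seq_mod_pk x 1 k.-1) add1n prednK // xk /=.
by rewrite !modz_small //= /pk ltz_nat ?expn1.
Qed.

End ZpadicUnits.

Section CosetCovers.
Variables p d : nat.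
Local Notation M := 'M[Zpadic p]_d.

Lemma mulmx_adj_SL (A : M) : inSL A -> A *m \adj A = 1%:M.
Proof. by move=> SA; rewrite mul_mx_adj SA. Qed.

Lemma inSL_adj (A : M) : inSL A -> inSL (\adj A).
Proof.
move=> SA; have /(congr1 determinant) := mulmx_adj_SL SA.
by rewrite det_mulmx SA mul1r det1.
Qed.

Definition covers_cosets (K : Type) (S H : M -> Prop) (g : K -> M) : Prop :=
  forall A, S A -> exists k h, H h /\ A = g k *m h.

Lemma covers_cosets_trans (K1 K2 : Type) (S T H : M -> Prop)
    (g1 : K1 -> M) (g2 : K2 -> M) :
  covers_cosets S T g1 -> covers_cosets T H g2 ->
  covers_cosets S H (fun k => g1 k.1 *m g2 k.2).
Proof.
move=> cov1 cov2 A /cov1 [k1 [B [/cov2 [k2 [h [Hh ->]]] ->]]].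
by exists (k1, k2), h; rewrite mulmxA.
Qed.

Lemma index_leSL_cover (K : finType) (H : M -> Prop) (g : K -> M) :
  (forall k, inSL (g k)) -> covers_cosets (@inSL p d) H g -> index_leSL H #|K|.
Proof.
move=> gSL cov; exists (g \o enum_val); split=> [i|A /cov [k [h [Hh ->]]]].
  exact: gSL.
by exists (enum_rank k), h; rewrite /= enum_rankK.
Qed.

(* The representatives are one element of [S] in each nonempty fibre of [kappa]. *)
Lemma covers_cosets_fibres (K : Type) (S H : M -> Prop) (kappa : M -> K) :
  S 1%:M -> (forall A, S A -> inSL A) ->
  (forall A B, S A -> S B -> kappa A = kappa B -> H (\adj A *m B)) ->
  exists g : K -> M, (forall k, S (g k)) /\ covers_cosets S H g.
Proof.
move=> S1 SSL fibreH.
have : forall k, exists A, S A /\ ((exists2 B, S B & kappa B = k) -> kappa A = k).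
  move=> k; case: (boolp.pselect (exists2 B, S B & kappa B = k)) => [[B SB <-]|noB].
    by exists B.
  by exists 1%:M; split=> // hk; case: noB.
case/boolp.choice => g gP; exists g; split=> [k|A SA]; first by case: (gP k).
have [Sg kg] := gP (kappa A); have {}kg := kg (ex_intro2 _ _ A SA erefl).
exists (kappa A), (\adj (g (kappa A)) *m A); split; first exact: fibreH.
by rewrite mulmxA mulmx_adj_SL ?mul1mx //; apply: SSL.
Qed.

End CosetCovers.

Lemma cofactor_row_eq (R : pzRingType) n (A B : 'M[R]_n) (i j : 'I_n) :
  (forall k l, k != i -> A k l = B k l) -> cofactor A i j = cofactor B i j.
Proof.
move=> AB; rewrite /cofactor; congr (_ * \det _).
by apply/matrixP => k l; rewrite !mxE AB // eq_sym neq_lift.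
Qed.

Lemma det_set_diag_entry (R : comPzRingType) n (B : 'M[R]_n) (i : 'I_n) (z : R) :
  \det (\matrix_(k, l) if (k == i) && (l == i) then z else B k l) =
  \det B + (z - B i i) * cofactor B i i.
Proof.
set B' := \matrix_(k, l) _.
have cofE j : cofactor B' i j = cofactor B i j.
  by apply: cofactor_row_eq => k l ki; rewrite mxE (negPf ki).
rewrite !(expand_det_row _ i) (bigD1 i) // [in RHS](bigD1 i) //= !cofE !mxE !eqxx.
rewrite (eq_bigr (fun j => B i j * cofactor B i j)) => [|j ji]; last first.
  by rewrite cofE mxE eqxx (negPf ji).
by rewrite /=; ring.
Qed.

Section CongruenceSubgroup.
Variables p m e : nat.
Hypothesis p_gt1 : (1 < p)%N.
Hypothesis m_gt0 : (0 < m)%N.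
Local Notation dd := e.+1.
Local Notation q := (p ^ m)%N.
Local Notation M := 'M[Zpadic p]_dd.

Lemma q_gt1 : (1 < q)%N.
Proof. exact: pk_gt1. Qed.

Lemma q2_gt1 : (1 < p ^ (m + m))%N.
Proof. by apply: pk_gt1 => //; rewrite addn_gt0 m_gt0. Qed.

Local Notation Zq2 := 'Z_(p ^ (m + m)).
Local Notation red1 := (zp_red q_gt1).
Local Notation red2 := (zp_red q2_gt1).

Definition Gamma (A : M) : Prop := map_mx red1 A = 1%:M.
Definition dev (A : M) : 'M[Zq2]_dd := map_mx red2 A - 1%:M.
Definition qmul (z : Zq2) : Prop := exists u, z = q%:R * u.

Lemma q2_eq0 : (q%:R : Zq2) * q%:R = 0.
Proof. by rewrite -natrM -expnD pchar_Zp // q2_gt1. Qed.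

Lemma zp_red2_sub_qmul (x y : Zpadic p) :
  zp_seq x m = zp_seq y m -> qmul (red2 x - red2 y).
Proof.
move=> xy; pose hi (z : Zpadic p) := (zp_seq z (m + m) %/ pk p m)%Z.
exists (hi x - hi y)%:~R.
rewrite /zp_red -intrB (divz_eq (zp_seq x (m + m)) (pk p m)).
rewrite (divz_eq (zp_seq y (m + m)) (pk p m)) -!zp_seq_mod_pk xy.
by rewrite -[q%:R]/((pk p m)%:~R : Zq2) -intrM; congr (_%:~R); ring.
Qed.

Lemma Gamma_dev_qmul (A : M) : Gamma A -> forall i j, qmul (dev A i j).
Proof.
move=> GA i j.
have red1E : red1 (A i j) = red1 (i == j)%:R.
  by rewrite rmorph_nat; move/matrixP/(_ i j): GA; rewrite !mxE.
by rewrite !mxE -(rmorph_nat red2); apply/zp_red2_sub_qmul/(zp_red_inj q_gt1).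
Qed.

Lemma Gamma1 : Gamma 1%:M.
Proof. exact: map_mx1. Qed.

Lemma GammaM (A B : M) : Gamma A -> Gamma B -> Gamma (A *m B).
Proof. by move=> GA GB; rewrite /Gamma map_mxM GA GB mul1mx. Qed.

Lemma dev1 : dev 1%:M = 0.
Proof. by rewrite /dev map_mx1 subrr. Qed.

Lemma devM (A B : M) : Gamma A -> Gamma B -> dev (A *m B) = dev A + dev B.
Proof.
move=> GA GB.
have devAB0 : dev A *m dev B = 0.
  apply/matrixP => i j; rewrite !mxE big1 // => l _.
  have [u ->] := Gamma_dev_qmul GA i l; have [v ->] := Gamma_dev_qmul GB l j.
  by rewrite mulrACA q2_eq0 mul0r.
have devK (C : M) : map_mx red2 C = dev C + 1%:M by rewrite subrK.
rewrite {1}/dev map_mxM (devK A) (devK B).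
move: (dev A) (dev B) devAB0 => X Y XY0.
by rewrite mulmxDl !mulmxDr XY0 mulmx1 !mul1mx add0r addrA addrK.
Qed.

Lemma GammaV (A B : M) : Gamma A -> A *m B = 1%:M -> Gamma B.
Proof.
by move=> GA /(congr1 (map_mx red1)); rewrite map_mxM GA mul1mx map_mx1.
Qed.

Lemma devV (A B : M) : Gamma A -> A *m B = 1%:M -> dev B = - dev A.
Proof.
move=> GA AB; apply/eqP; rewrite -addr_eq0 addrC -devM ?AB ?dev1 //.
exact: GammaV AB.
Qed.

Lemma Gamma_congr (A B : M) : congr_mod (m + m) A B -> Gamma A -> Gamma B.
Proof.
move=> AB; rewrite /Gamma => <-; apply/matrixP => i j; rewrite !mxE /zp_red.
by rewrite (zp_seq_mod_pk (A i j) m m) (zp_seq_mod_pk (B i j) m m) AB.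
Qed.

Lemma dev_congr (A B : M) : congr_mod (m + m) A B -> dev A = dev B.
Proof.
by move=> AB; congr (_ - _); apply/matrixP => i j; rewrite !mxE /zp_red AB.
Qed.

Local Notation L := (@ord_max e).

Lemma exists_test_element (v : 'I_dd -> 'I_dd -> nat) : exists A : M,
  [/\ inSL A, Gamma A & forall i j, (i, j) != (L, L) -> dev A i j = q%:R * (v i j)%:R].
Proof.
pose B : M := 1%:M + \matrix_(i, j) (q * v i j)%:R.
have red1B i j : red1 (B i j) = (i == j)%:R.
  by rewrite !mxE rmorphD !rmorph_nat natrM pchar_Zp ?q_gt1 // mul0r addr0.
have GB : Gamma B by apply/matrixP => i j; rewrite mxE red1B mxE.
have [y cofBy] : exists y, cofactor B L L * y = 1.
  apply: (zp_unit_red1 p_gt1 (hk := q_gt1)).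
  rewrite -cofactor_map_mx GB.
  by have /matrixP/(_ L L) := @adj1 'Z_(p ^ m) dd; rewrite !mxE eqxx.
pose z := B L L + (1 - \det B) * y.
pose A : M := \matrix_(k, l) if (k == L) && (l == L) then z else B k l.
have red1z : red1 z = 1.
  rewrite rmorphD rmorphM rmorphB rmorph1 -det_map_mx GB det1 subrr mul0r addr0.
  by move: (red1B L L); rewrite eqxx.
exists A; split.
- rewrite /inSL det_set_diag_entry /z addrAC subrr add0r -mulrA [y * _]mulrC.
  by rewrite cofBy mulr1 addrC subrK.
- apply/matrixP => i j; rewrite mxE [A i j]mxE [RHS]mxE.
  by case: ifP => [/andP [/eqP -> /eqP ->]|_]; [rewrite red1z eqxx | exact: red1B].
- move=> i j ijL; rewrite !mxE ifF; last first.
    by apply: contraNF ijL => /andP [/eqP -> /eqP ->].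
  by rewrite rmorphD !rmorph_nat natrM addrAC subrr add0r.
Qed.

Lemma q_mul_inj (a b : nat) : (a < q)%N -> (b < q)%N ->
  (q%:R : Zq2) * a%:R = q%:R * b%:R -> a = b.
Proof.
move=> aq bq; have q_gt0 := ltnW q_gt1.
rewrite -!natrM => /(congr1 (@nat_of_ord _)); rewrite !val_Zp_nat ?q2_gt1 // expnD.
by rewrite !modn_small ?ltn_pmul2l // => /eqP; rewrite eqn_pmul2l // => /eqP.
Qed.

Lemma qpart_subproof (z : Zq2) : (z %/ q < q)%N.
Proof. by rewrite ltn_divLR ?(ltnW q_gt1) // -expnD -{2}(Zp_cast q2_gt1). Qed.

Definition qpart (z : Zq2) : 'I_q := Ordinal (qpart_subproof z).

Lemma qpartK (z : Zq2) : qmul z -> z = q%:R * (qpart z)%:R.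
Proof.
case=> u ->; rewrite -[u]natr_Zp; move: (nat_of_ord u) => a.
rewrite -natrM /= val_Zp_nat ?q2_gt1 //.
have -> : ((q * a) %% p ^ (m + m) = q * (a %% q))%N by rewrite expnD muln_modr.
rewrite mulKn ?(ltnW q_gt1) // natrM {1}(divn_eq a q) natrD mulrDr natrM.
by rewrite mulrCA q2_eq0 mulr0 add0r.
Qed.

(* Row-major enumeration of the entries: [(L, L)], the entry that test elements
   use to adjust their determinant, comes last. *)
Definition pos (i : nat) : 'I_dd * 'I_dd := (inord (i %/ dd), inord (i %% dd)).
Definition entry_at (Z : 'M[Zq2]_dd) (i : nat) : Zq2 := Z (pos i).1 (pos i).2.

Lemma posK i : (i < dd * dd)%N -> ((pos i).1 * dd + (pos i).2)%N = i.
Proof.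
move=> lt; rewrite /pos /= !inordK ?ltn_pmod // -?divn_eq //.
by rewrite ltn_divLR.
Qed.

Lemma pos_neq_max i : (i.+1 < dd * dd)%N -> pos i != (L, L).
Proof.
move=> lti; apply/eqP => posE.
have := posK (ltnW lti); rewrite posE /= => iE.
by move: lti; rewrite -iE; nia.
Qed.

Section GraphSubgroups.
Variables r t : nat.

(* [graph_subgroup phi] is the preimage under [dev] of the graph of the linear
   map [(Z/q)^r -> (Z/q)^t] with matrix [phi], read on the first [r + t]
   entries. *)
Definition delta (phi : 'M['I_q]_(t, r)) (b : 'I_t) (Z : 'M[Zq2]_dd) : Zq2 :=
  entry_at Z (r + b) - \sum_(s < r) (phi b s)%:R * entry_at Z s.

Lemma delta_is_zmod_morphism phi b : zmod_morphism (delta phi b).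
Proof.
move=> Z1 Z2; have entryB i : entry_at (Z1 - Z2) i = entry_at Z1 i - entry_at Z2 i.
  by rewrite /entry_at !mxE.
rewrite /delta entryB (eq_bigr (fun s => (phi b s)%:R * entry_at Z1 s -
  (phi b s)%:R * entry_at Z2 s)) => [|s _]; last by rewrite entryB mulrBr.
by rewrite sumrB; ring.
Qed.

HB.instance Definition _ phi b :=
  GRing.isZmodMorphism.Build _ _ (delta phi b) (delta_is_zmod_morphism phi b).

Lemma deltaD phi b Z1 Z2 : delta phi b (Z1 + Z2) = delta phi b Z1 + delta phi b Z2.
Proof. exact: raddfD. Qed.

Lemma deltaN phi b Z : delta phi b (- Z) = - delta phi b Z.
Proof. exact: raddfN. Qed.

Definition graph_subgroup (phi : 'M['I_q]_(t, r)) (A : M) : Prop :=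
  [/\ inSL A, Gamma A & forall b, delta phi b (dev A) = 0].

Lemma graph_subgroup_subgroup (phi : 'M['I_q]_(t, r)) :
  is_subgroupSL (graph_subgroup phi).
Proof.
split.
- by move=> A [].
- by split; [exact: det1 | exact: Gamma1 | move=> b; rewrite dev1 raddf0].
- move=> A B [SA GA dA] [SB GB dB]; split.
  + by rewrite /inSL det_mulmx SA SB mulr1.
  + exact: GammaM.
  + by move=> b; rewrite devM // deltaD dA dB addr0.
- move=> A B [SA GA dA] SB AB; split=> //; first exact: GammaV AB.
  by move=> b; rewrite (devV GA AB) deltaN dA oppr0.
Qed.

Lemma graph_subgroup_open (phi : 'M['I_q]_(t, r)) : is_openSL (graph_subgroup phi).
Proof.
move=> A [SA GA dA]; exists (m + m)%N => B SB AB.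
by split=> //; [exact: Gamma_congr AB GA | rewrite -(dev_congr AB)].
Qed.

Lemma Gamma_cosets : exists g : 'M['Z_q]_dd -> M,
  (forall k, inSL (g k)) /\ covers_cosets (@inSL p dd) (fun A => inSL A /\ Gamma A) g.
Proof.
apply: (covers_cosets_fibres (kappa := map_mx red1)) => // [|A B SA SB AB].
  exact: det1.
split; first by rewrite /inSL det_mulmx SB (inSL_adj SA) mulr1.
have detB : \det (map_mx red1 B) = 1 by rewrite det_map_mx SB rmorph1.
by rewrite /Gamma map_mxM map_mx_adj AB mul_adj_mx detB.
Qed.

Lemma delta_qmul (phi : 'M['I_q]_(t, r)) b (A : M) :
  Gamma A -> qmul (delta phi b (dev A)).
Proof.
move=> GA; have entry_qmul i : qmul (entry_at (dev A) i) by apply: Gamma_dev_qmul.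
rewrite /delta; have [u ->] := entry_qmul (r + b)%N.
have [v ->] : qmul (\sum_(s < r) (phi b s)%:R * entry_at (dev A) s).
  apply: (big_ind qmul) => [|_ _ [x ->] [y ->]|s _]; first by exists 0; rewrite mulr0.
    by exists (x + y); rewrite mulrDr.
  by have [x ->] := entry_qmul s; exists ((phi b s)%:R * x); rewrite mulrCA.
by exists (u - v); rewrite mulrBr.
Qed.

Lemma graph_subgroup_cosets (phi : 'M['I_q]_(t, r)) :
  exists g : {ffun 'I_t -> 'I_q} -> M,
  (forall k, inSL (g k) /\ Gamma (g k)) /\
  covers_cosets (fun A => inSL A /\ Gamma A) (graph_subgroup phi) g.
Proof.
pose kappa A := [ffun b => qpart (delta phi b (dev A))].
apply: (covers_cosets_fibres (kappa := kappa)) => [|A []//|A B [SA GA] [SB GB] AB].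
  by split; [exact: det1 | exact: Gamma1].
have GA' := GammaV GA (mulmx_adj_SL SA).
split; first by rewrite /inSL det_mulmx SB (inSL_adj SA) mulr1.
  exact: GammaM.
move=> b; rewrite devM // (devV GA (mulmx_adj_SL SA)) deltaD deltaN.
rewrite (qpartK (delta_qmul phi b GA)) (qpartK (delta_qmul phi b GB)).
by move/ffunP/(_ b): AB; rewrite !ffunE => ->; rewrite addNr.
Qed.

Lemma graph_subgroup_index (phi : 'M['I_q]_(t, r)) :
  index_leSL (graph_subgroup phi) (q ^ (dd * dd + t)).
Proof.
have [g1 [g1SL cov1]] := Gamma_cosets.
have [g2 [g2SL cov2]] := graph_subgroup_cosets phi.
have -> : (q ^ (dd * dd + t) = #|{: 'M['Z_q]_dd * {ffun 'I_t -> 'I_q}}|)%N.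
  by rewrite card_prod card_mx card_ffun !card_ord Zp_cast ?q_gt1 // expnD.
apply: index_leSL_cover (covers_cosets_trans cov1 cov2) => k.
by rewrite /inSL det_mulmx g1SL mul1r; case: (g2SL k.2).
Qed.

(* Distinct [phi] are separated by a test element whose first [r + t] entries
   of [dev] are [q] times column [s0] of [col_mx 1%:M phi]. *)
Lemma graph_subgroup_inj : (r + t < dd * dd)%N -> injective graph_subgroup.
Proof.
move=> rt phi psi phipsi; apply/matrixP => b s0; apply: val_inj.
pose w (x : nat) : nat := ((x == s0 :> nat) + \sum_(c < t) (r + c == x) * phi c s0)%N.
have w_low (s : 'I_r) : w s = (s == s0) :> nat.
  rewrite /w big1 ?addn0 // => c _.
  rewrite (_ : (r + c == s)%N = false) ?mul0n //.
  by apply/negbTE; rewrite neq_ltn (ltn_addr _ (ltn_ord s)) orbT.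
have w_high (c : 'I_t) : w (r + c)%N = phi c s0.
  rewrite /w (_ : (r + c == s0)%N = false) ?add0n; last first.
    by apply/negbTE; rewrite neq_ltn (ltn_addr _ (ltn_ord s0)) orbT.
  rewrite (bigD1 c) //= eqxx mul1n big1 ?addn0 // => c' c'c.
  by rewrite eqn_add2l (negPf (c'c : (c' : nat) != c)) mul0n.
have [A [SA GA devA]] := exists_test_element (fun i j => w (i * dd + j)%N).
have entryA x : (x < r + t)%N -> entry_at (dev A) x = q%:R * (w x)%:R.
  move=> xlt; have xdd : (x.+1 < dd * dd)%N by apply: leq_ltn_trans rt.
  by rewrite /entry_at devA ?posK ?(ltnW xdd) // -surjective_pairing pos_neq_max.
have deltaA chi c : delta chi c (dev A) = q%:R * ((phi c s0)%:R - (chi c s0)%:R).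
  rewrite /delta entryA ?ltn_add2l // w_high (bigD1 s0) //= big1 ?addr0 => [|s ss0].
    rewrite entryA ?ltn_addr // w_low eqxx mulr1n mulr1 mulrBr.
    by rewrite [(chi c s0)%:R * _]mulrC.
  by rewrite entryA ?ltn_addr // w_low (negPf ss0) mulr0n !mulr0.
have : graph_subgroup phi A by split=> // c; rewrite deltaA subrr mulr0.
rewrite phipsi => -[_ _ /(_ b)]; rewrite deltaA => /eqP.
by rewrite mulrBr subr_eq0 => /eqP; apply: q_mul_inj.
Qed.

End GraphSubgroups.

End CongruenceSubgroup.

Lemma exists_sqrt2_ceil (D : nat) : (2 <= D)%N -> exists u : nat,
  [/\ (D <= u <= 2 * D)%N, (2 * D * D <= u * u)%N & ((u - 1) * (u - 1) < 2 * D * D)%N].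
Proof.
move=> D_ge2; have ex_u : exists u, (2 * D * D <= u * u)%N by exists (2 * D); nia.
case: (ex_minnP ex_u) => u lo u_min.
have u2D : (u <= 2 * D)%N by apply: u_min; nia.
have Du : (D <= u)%N by case: leqP => // uD; nia.
exists u; split; [by rewrite Du | by [] |].
by case: ltnP => // /u_min; lia.
Qed.

Theorem proposition6p5 (p d : nat) :
  prime p -> odd p -> (2 <= d)%N ->
  forall N : nat, exists n : nat, (N < n)%N /\
    exists (k : nat) (Hs : 'I_k -> ('M[Zpadic p]_d -> Prop)),
      injective Hs /\
      (forall i, open_subgroup_index_le (Hs i) n) /\
      Rdefinitions.Rle (Rpower.Rpower (Raxioms.INR n) (growth_exponent d))
                       (Raxioms.INR k).
Proof.
move=> /prime_gt1 p_gt1 _ d_ge2 N.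
case: d d_ge2 => [//|e] d_ge2.
pose D := (e.+1 * e.+1).-1.
have dD : (e.+1 * e.+1 = D + 1)%N by rewrite addn1 prednK ?muln_gt0.
have D_ge2 : (2 <= D)%N by rewrite /D; nia.
have [u [/andP [Du u2D] lo hi]] := exists_sqrt2_ceil D_ge2.
pose r := (2 * D - u)%N; pose t := (u - D)%N.
have rt : (r + t < e.+1 * e.+1)%N by rewrite /r /t; lia.
have m_gt0 : (0 < N.+1)%N by [].
have q_gt1 := q_gt1 p_gt1 m_gt0.
exists ((p ^ N.+1) ^ (e.+1 * e.+1 + t))%N; split.
  apply: (ltn_trans (ltnSn N)); apply: (leq_trans (ltn_expl N.+1 p_gt1)).
  rewrite -{1}(expn1 (p ^ N.+1)).
  by rewrite leq_pexp2l ?(ltnW q_gt1) // addn_gt0 muln_gt0.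
exists #|{: 'M['I_(p ^ N.+1)]_(t, r)}|,
  (fun i => graph_subgroup p_gt1 m_gt0 (enum_val i)).
split; [|split].
- by move=> i j /(graph_subgroup_inj rt)/enum_val_inj.
- by move=> i; split; [exact: graph_subgroup_subgroup | exact: graph_subgroup_open
    | exact: graph_subgroup_index].
- rewrite card_mx card_ord !(GrowthExponent.INR_expn (p ^ N.+1)).
  apply: GrowthExponent.Rpower_pow_le.
    exact: (RIneq.le_INR 1 _ (ssrnat.leP (ltnW q_gt1))).
  exact: (GrowthExponent.growth_exponent_le e.+1 D u dD
    (conj (ssrnat.leP Du) (ssrnat.leP u2D)) (ssrnat.leP lo) (ssrnat.ltP hi)).
Qed.
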